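(* Let $X$ be a GOGAm triangle of size $n$. (i) For $1\leq k\leq n$, the triangle obtained from $X$ by replacing every entry $X_{i,j}$ with $n\geq i\geq j+k$ by $1$ is a GOGAm triangle. (ii) Let $n\geq m\geq k\geq 1$. Suppose that for every $i\geq m+1$ the partial SW–NE diagonal $(X_{i+l,k+l})_{0\leq l\leq n-i}$ is constant. Then the triangle obtained from $X$ by replacing the entries $X_{m+l,k+l}$, $1\leq l\leq n-m$, by $X_{m,k}$ is a GOGAm triangle.
   Context: A Gelfand–Tsetlin triangle of size $n$ is an array $X=(X_{i,j})_{n\geq i\geq j\geq 1}$ of positive integers (row $n$ is the top row, row $1$ the bottom) with $X_{i+1,j}\leq X_{i,j}\leq X_{i+1,j+1}$ for all $n-1\geq i\geq j\geq 1$. A Magog triangle of size $n$ is a Gelfand–Tsetlin triangle with $X_{j,j}\leq j$ for all $j$. For $1\leq k\leq n-1$, $s_k$ changes only row $k$, replacing $X_{k,j}$ by $\max(X_{k+1,j},X_{k-1,j-1})+\min(X_{k+1,j+1},X_{k-1,j})-X_{k,j}$ (terms outside the triangle omitted); $\omega_j=s_j\circ\cdots\circ s_1$, $S=\omega_1\circ\cdots\circ\omega_{n-1}$. A GOGAm triangle of size $n$ is a Gelfand–Tsetlin triangle $X$ with $S(X)$ a Magog triangle. (Equivalently, by a known result, $X_{n,n}\leq n$ and for all $1\leq k\leq n-1$ and all $n=j_0>\dots>j_{n-k}\geq 1$: $\sum_{i=0}^{n-k-1}(X_{j_i+i,j_i}-X_{j_{i+1}+i,j_{i+1}})+X_{j_{n-k}+n-k,j_{n-k}}\leq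 k$.) *)

From mathcomp Require Import all_boot.
Set Implicit Arguments. Unset Strict Implicit. Unset Printing Implicit Defensive.

(* A triangle is a function X : nat -> nat -> nat; X i j is the entry X_{i,j}.
   Only entries with n >= i >= j >= 1 are relevant; all predicates below only
   inspect those entries. *)
Definition triangle := nat -> nat -> nat.

Definition GT (n : nat) (X : triangle) : Prop :=
  (forall i j, 1 <= j -> j <= i -> i <= n -> 1 <= X i j) /\
  (forall i j, 1 <= j -> j <= i -> i <= n - 1 ->
     X i.+1 j <= X i j /\ X i j <= X i.+1 j.+1).

Definition Magog (n : nat) (X : triangle) : Prop :=
  GT n X /\ (forall j, 1 <= j -> j <= n -> X j j <= j).

(* The involution s_k (for 1 <= k <= n-1): only row k changes;
   X_{k,j} := max(X_{k+1,j}, X_{k-1,j-1}) + min(X_{k+1,j+1}, X_{k-1,j}) - X_{k,j},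
   where terms outside the triangle are omitted: X_{k-1,j-1} exists iff j >= 2,
   X_{k-1,j} exists iff j <= k-1 (omitting in a max of positive entries = max with 0). *)
Definition s_op (k : nat) (X : triangle) : triangle :=
  fun i j =>
    if (i == k) && (1 <= j <= k) then
      let mx := if 2 <= j then maxn (X k.+1 j) (X k.-1 j.-1) else X k.+1 j in
      let mn := if j <= k.-1 then minn (X k.+1 j.+1) (X k.-1 j) else X k.+1 j.+1 in
      mx + mn - X k j
    else X i j.

Fixpoint omega (j : nat) (X : triangle) : triangle :=
  match j with
  | 0 => X
  | j'.+1 => s_op j'.+1 (omega j' X)
  end.

Fixpoint S_aux (m : nat) (X : triangle) : triangle :=
  match m with
  | 0 => X
  | m'.+1 => S_aux m' (omega m'.+1 X)
  end.

Definition S_op (n : nat) (X : triangle) : triangle := S_aux n.-1 X.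

Definition GOGAm (n : nat) (X : triangle) : Prop := GT n X /\ Magog n (S_op n X).

From Stdlib Require Import ZArith Lia.
From mathcomp Require Import all_boot zify.
Set Implicit Arguments. Unset Strict Implicit. Unset Printing Implicit Defensive.

(* The diagonal entries of [S X] are last-passage values ([S_op_diagZ]):
   [(S X)_{t,t}] is the maximum, over lattice paths, of an entry of [X] plus the
   increments [X_{i+1,j+1} - X_{i,j}] along SW-NE diagonals collected on the way.
   This is proved one [omega] at a time: applying [s_1, ..., s_{N-1}] lowers the
   base level of the path value by one.  Such a value is monotone in the entries
   and in the diagonal increments ([passage_mono]).  Both modifications in the
   theorem keep the triangle Gelfand-Tsetlin and increase no entry and no
   diagonal increment, so the Magog bounds on the diagonal of [S X] survive. *)

Lemma s_op_other_row k X i j : i != k -> s_op k X i j = X i j.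
Proof. by move=> h; rewrite /s_op (negbTE h). Qed.

Lemma s_op_row k X j : 1 <= j <= k -> s_op k X k j =
  (if 2 <= j then maxn (X k.+1 j) (X k.-1 j.-1) else X k.+1 j) +
  (if j <= k.-1 then minn (X k.+1 j.+1) (X k.-1 j) else X k.+1 j.+1) - X k j.
Proof. by move=> h; rewrite /s_op eqxx h. Qed.

Section GTFacts.
Variables (n : nat) (X : triangle).
Hypothesis GX : GT n X.

Lemma GT_ge1 i j : 1 <= j -> j <= i -> i <= n -> 1 <= X i j.
Proof. by case: GX => h _; apply: h. Qed.

Lemma GT_interlace_l i j : 1 <= j -> j <= i -> i <= n - 1 -> X i.+1 j <= X i j.
Proof. by case: GX => _ h hj hi hn; case: (h i j hj hi hn). Qed.

Lemma GT_interlace_r i j : 1 <= j -> j <= i -> i <= n - 1 -> X i j <= X i.+1 j.+1.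
Proof. by case: GX => _ h hj hi hn; case: (h i j hj hi hn). Qed.

Lemma GT_pred_size : GT n.-1 X.
Proof. by case: GX => h1 h2; split=> i j *; [apply: h1 | apply: h2]; lia. Qed.

Lemma GT_diag_mono d c c' : 1 <= c -> c <= c' -> c' + d <= n ->
  X (c + d) c <= X (c' + d) c'.
Proof.
move=> hc hcc'; rewrite -(subnKC hcc').
elim: (c' - c) => [|l IH] hl; first by rewrite addn0.
have := GT_interlace_r (i := c + l + d) (j := c + l) ltac:(lia) ltac:(lia) ltac:(lia).
rewrite -addSn -!addnS; have := IH ltac:(lia); lia.
Qed.

Lemma s_op_row_bounds k j : 1 <= k -> k <= n - 1 -> 1 <= j -> j <= k ->
  [/\ X k.+1 j <= s_op k X k j, s_op k X k j <= X k.+1 j.+1,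
      (2 <= j -> X k.-1 j.-1 <= s_op k X k j) &
      (j <= k.-1 -> s_op k X k j <= X k.-1 j)].
Proof.
move=> hk hkn hj hjk; rewrite s_op_row; last by rewrite hj hjk.
have a1 := GT_interlace_l hj hjk hkn.
have a2 := GT_interlace_r hj hjk hkn.
have a3 : 2 <= j -> X k.-1 j.-1 <= X k j.
  move=> h2; have := GT_interlace_r (i := k.-1) (j := j.-1).
  rewrite !prednK; [|lia|lia]; apply; lia.
have a4 : j <= k.-1 -> X k j <= X k.-1 j.
  move=> h2; have := GT_interlace_l (i := k.-1) (j := j).
  rewrite prednK; [|lia]; apply; lia.
case: ifP => h2; case: ifP => h3.
- by move: (a3 h2) (a4 h3) => *; split; lia.
- by move: (a3 h2) => *; split; lia.
- by move: (a4 h3) => *; split; lia.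
- by split; lia.
Qed.

Lemma s_op_GT k : 1 <= k -> k <= n - 1 -> GT n (s_op k X).
Proof.
move=> hk hkn; split=> i j hj hji hin.
  case: (eqVneq i k) => [eik|hik]; last by rewrite s_op_other_row //; exact: GT_ge1.
  subst i; have [b1 _ _ _] := s_op_row_bounds hk hkn hj hji.
  have := GT_ge1 (i := k.+1) (j := j); lia.
case: (eqVneq i k) => [eik|hik].
  subst i; have [b1 b2 _ _] := s_op_row_bounds hk hkn hj hji.
  by rewrite !(s_op_other_row _ _ (i := k.+1)) ?gtn_eqF.
rewrite (s_op_other_row _ _ hik).
case: (eqVneq i.+1 k) => [eik|hik1]; last first.
  by rewrite !(s_op_other_row _ _ hik1); split;
    [exact: GT_interlace_l | exact: GT_interlace_r].
have ek : i = k.-1 by lia.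
have [_ _ _ b4] := s_op_row_bounds (j := j) hk hkn hj ltac:(lia).
have [_ _ b3 _] := s_op_row_bounds (j := j.+1) hk hkn ltac:(lia) ltac:(lia).
rewrite eik ek; split; [apply: b4 | apply: b3]; lia.
Qed.

End GTFacts.

Lemma omega_GT n m X : m <= n - 1 -> GT n X -> GT n (omega m X).
Proof.
by elim: m => [|m IH] //= hm G; apply: s_op_GT; [apply: IH => // | |]; lia.
Qed.

Lemma S_aux_GT n m X : m <= n - 1 -> GT n X -> GT n (S_aux m X).
Proof. by elim: m X => [|m IH] X //= hm G; apply: IH; [lia | exact: omega_GT hm G]. Qed.

Lemma omega_above m X i j : m < i -> omega m X i j = X i j.
Proof.
by elim: m => [|m IH] //= hm; rewrite s_op_other_row; [apply: IH | apply/eqP]; lia.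
Qed.

Lemma S_aux_above m X i j : m < i -> S_aux m X i j = X i j.
Proof.
elim: m X => [|m IH] X hm //.
by rewrite [LHS]IH; [exact: omega_above | lia].
Qed.

Lemma omega_row_final m k X j : k <= m -> omega m X k j = omega k X k j.
Proof.
elim: m => [|m IH] hk; first by have -> : k = 0 by lia.
case: (eqVneq k m.+1) => [-> //|hne].
by rewrite /= s_op_other_row //; apply: IH; lia.
Qed.

Open Scope Z_scope.

Definition diagZ (X : triangle) (d c : nat) : Z := Z.of_nat (X (c + d)%N c).

(* For [x = diagZ X] and [z = diagZ (omega n.-1 X)], whose row [k] is final once
   [s_k] has been applied, [gain x z e c] is the term
   [min (X_{k+1,j+1}, Z_{k-1,j}) - X_{k,j}] of the toggle at [X_{k,j} = x e c]. *)
Definition gain (x z : nat -> nat -> Z) (e c : nat) : Z :=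
  Z.min (x e c.+1) (if e is e'.+1 then z e' c else x 0%N c.+1) - x e c.

Section FullToggle.
Variables (n : nat) (X : triangle).
Hypothesis GX : GT n X.
Let Xt := omega n.-1 X.

Lemma omega_row_eqZ k j : (1 <= j)%N -> (j <= k)%N -> (k <= n.-1)%N ->
  Z.of_nat (Xt k j) =
  (if (2 <= j)%N then Z.max (Z.of_nat (X k.+1 j)) (Z.of_nat (Xt k.-1 j.-1))
   else Z.of_nat (X k.+1 j))
  + (if (j <= k.-1)%N then Z.min (Z.of_nat (X k.+1 j.+1)) (Z.of_nat (Xt k.-1 j))
     else Z.of_nat (X k.+1 j.+1))
  - Z.of_nat (X k j).
Proof.
move=> hj hjk hkn.
have -> : Xt k j = s_op k (omega k.-1 X) k j.
  by rewrite /Xt omega_row_final //; case: k hjk {hkn} => [|k]; first lia.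
rewrite s_op_row; last by rewrite hj hjk.
set W := omega k.-1 X.
have GW : GT n W by apply: omega_GT => //; lia.
have W1 j' : W k.+1 j' = X k.+1 j' by apply: omega_above; lia.
have W2 j' : W k j' = X k j' by apply: omega_above; lia.
have W3 j' : W k.-1 j' = Xt k.-1 j' by rewrite /Xt omega_row_final //; lia.
have b1 := GT_interlace_r GW hj hjk ltac:(lia).
have b2 : (j <= k.-1)%N -> (W k j <= W k.-1 j)%N.
  by move=> h; have := GT_interlace_l GW (i := k.-1) hj h ltac:(lia); rewrite prednK //; lia.
rewrite !W1 !W2 !W3 in b1 b2 *.
by case: ifP => h2; case: ifP => h3; [have := b2 h3 | | have := b2 h3 |]; lia.
Qed.

Lemma omega_diagZ e c : (1 <= c)%N -> (c + e <= n.-1)%N ->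
  diagZ Xt e c = (if c == 1%N then diagZ X e.+1 1 else Z.max (diagZ X e.+1 c) (diagZ Xt e c.-1))
                 + gain (diagZ X) (diagZ Xt) e c.
Proof.
move=> hc hce; rewrite /diagZ omega_row_eqZ /gain /diagZ; try lia.
case: c hc hce => [|[|c]] hc hce //.
- by case: e hce => [|e] hce /=; rewrite ?addnS ?addSn ?addn0 ?add0n /=; lia.
- case: e hce => [|e] hce /=; rewrite ?addnS ?addSn ?addn0 ?add0n /=.
    by rewrite ltnn; lia.
  have -> : (c.+1 < (c + e).+2)%N by lia.
  lia.
Qed.

End FullToggle.

Fixpoint iter_range (op : Z -> Z -> Z) (f : nat -> Z) (a len : nat) : Z :=
  if len is l.+1 then op (iter_range op f a l) (f (a + l.+1)%N) else f a.

(* [max_range f a b] and [sum_range f a b] range over [a <= i <= b]; both are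
   [f a] when [b <= a]. *)
Definition max_range f a b := iter_range Z.max f a (b - a).
Definition sum_range f a b := iter_range Z.add f a (b - a).

Lemma iter_range1 op f a : iter_range op f a (a - a) = f a.
Proof. by rewrite subnn. Qed.

Lemma iter_rangeS op f a b : (a <= b)%N ->
  iter_range op f a (b.+1 - a) = op (iter_range op f a (b - a)) (f b.+1).
Proof. by move=> h; rewrite subSn //= addnS subnKC. Qed.

Lemma nat_ind_from (P : nat -> Prop) a : P a -> (forall b, (a <= b)%N -> P b -> P b.+1) ->
  forall b, (a <= b)%N -> P b.
Proof.
move=> Pa PS b /subnKC <-; elim: (b - a)%N => [|k IH]; first by rewrite addn0.
by rewrite addnS; apply: PS => //; rewrite leq_addr.
Qed.

Lemma eq_max_range f g a b : (forall i, (a <= i <= b)%N -> f i = g i) ->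
  (a <= b)%N -> max_range f a b = max_range g a b.
Proof.
move=> + hab; move: b hab; apply: nat_ind_from => [|b hab IH] Efg.
  by rewrite /max_range !iter_range1; apply: Efg; rewrite leqnn.
rewrite /max_range !iter_rangeS // -!/(max_range _ a b) IH ?Efg //; [lia | move=> i hi].
by apply: Efg; lia.
Qed.

Lemma max_range1 f a : max_range f a a = f a.
Proof. exact: iter_range1. Qed.

Lemma max_rangeS f a b : (a <= b)%N -> max_range f a b.+1 = Z.max (max_range f a b) (f b.+1).
Proof. exact: iter_rangeS. Qed.

Lemma sum_range1 f a : sum_range f a a = f a.
Proof. exact: iter_range1. Qed.

Lemma sum_rangeS f a b : (a <= b)%N -> sum_range f a b.+1 = sum_range f a b + f b.+1.
Proof. exact: iter_rangeS. Qed.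

Lemma max_rangeDr f a b k : (a <= b)%N ->
  max_range (fun i => f i + k) a b = max_range f a b + k.
Proof.
move: b; apply: nat_ind_from => [|b hab IH]; first by rewrite !max_range1.
by rewrite !max_rangeS // IH; lia.
Qed.

Lemma max_range_max f g a b : (a <= b)%N ->
  max_range (fun i => Z.max (f i) (g i)) a b = Z.max (max_range f a b) (max_range g a b).
Proof.
move: b; apply: nat_ind_from => [|b hab IH]; first by rewrite !max_range1.
by rewrite !max_rangeS // IH; lia.
Qed.

Lemma max_range_exchange (U V : nat -> Z) a c : (a <= c)%N ->
  max_range (fun j => max_range U a j.-1 + V j) a.+1 c.+1 =
  max_range (fun j => U j + max_range V j.+1 c.+1) a c.
Proof.
move: c; apply: nat_ind_from => [|c hac IH]; first by rewrite !max_range1.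
rewrite max_rangeS ?IH //= (max_rangeS (fun j => U j + _)) // max_range1.
rewrite (@eq_max_range (fun j => U j + max_range V j.+1 c.+2)
  (fun j => Z.max (U j + max_range V j.+1 c.+1) (U j + V c.+2))) //;
  last by move=> i hi; rewrite max_rangeS; lia.
by rewrite max_range_max // (max_rangeDr U) // (max_rangeS U) //; lia.
Qed.

Lemma max_range_sum_rangeS (g d : nat -> Z) a c : (a <= c)%N ->
  max_range (fun j => g j + sum_range d j c.+1) a c.+1 =
  Z.max (max_range (fun j => g j + sum_range d j c) a c) (g c.+1) + d c.+1.
Proof.
move=> hac; rewrite max_rangeS // sum_range1.
rewrite (@eq_max_range _ (fun j => g j + sum_range d j c + d c.+1)) //.
  by rewrite max_rangeDr //; lia.
by move=> i hi; rewrite sum_rangeS; lia.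
Qed.

(* [passage x L e c] (meaningful for [L - e <= c]) is a last-passage value: the
   maximum, over paths that start at level [L] in some column [c0] and reach level
   [e] in column [c], each step raising the column by one and lowering the level
   by at most one, of [x L c0.+1] plus the increments [x e' c'.+1 - x e' c'] at
   the points visited after the start. *)
Fixpoint passage_rec (x : nat -> nat -> Z) (L : nat) (c k : nat) {struct c} : Z :=
  match k, c with
  | O, _ => x L c.+1
  | k'.+1, O => 0
  | k'.+1, c'.+1 =>
      if (c' < k')%N then 0 else
        (if (k' < c')%N then Z.max (passage_rec x L c' k) (passage_rec x L c' k')
         else passage_rec x L c' k')
        + (x (L - k)%N c.+1 - x (L - k)%N c)
  end.

Definition passage x L e c := passage_rec x L c (L - e).

Lemma passage_base x L c : passage x L L c = x L c.+1.
Proof. by rewrite /passage subnn; case: c. Qed.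

Lemma passage_corner x L e : (e < L)%N ->
  passage x L e (L - e) =
  passage x L e.+1 (L - e).-1 + (x e (L - e)%N.+1 - x e (L - e)%N).
Proof.
move=> h; rewrite /passage (_ : (L - e = (L - e.+1).+1)%N) /=; last by lia.
by rewrite ltnn (_ : (L - (L - e.+1).+1 = e)%N) //; lia.
Qed.

Lemma passageE x L e c : (e < L)%N -> (L - e < c)%N ->
  passage x L e c = Z.max (passage x L e c.-1) (passage x L e.+1 c.-1) + (x e c.+1 - x e c).
Proof.
move=> h; rewrite /passage (_ : (L - e = (L - e.+1).+1)%N); last by lia.
case: c => [|c] hc /=; first by lia.
have -> : (c < L - e.+1)%N = false by lia.
have -> : (L - e.+1 < c)%N by lia.
by have -> : (L - (L - e.+1).+1 = e)%N by lia.
Qed.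

Lemma passage_mono (x y : nat -> nat -> Z) L N :
  (forall c, (c + L < N)%N -> y L c.+1 <= x L c.+1) ->
  (forall e c, (e < L)%N -> (1 <= c)%N -> (c + e < N)%N ->
      y e c.+1 - y e c <= x e c.+1 - x e c) ->
  forall e c, (e <= L)%N -> (L - e <= c)%N -> (c + e < N)%N ->
    passage y L e c <= passage x L e c.
Proof.
move=> hbase hincr e c; elim: c e => [|c IH] e he hc hN.
  by rewrite (_ : e = L) ?passage_base; [apply: hbase | ]; lia.
case: (eqVneq e L) => [eL | neL]; first by subst e; rewrite !passage_base; apply: hbase; lia.
have heL : (e < L)%N by lia.
have hincr' := hincr e c.+1 ltac:(lia) ltac:(lia) ltac:(lia).
have IHup := IH e.+1 ltac:(lia) ltac:(lia) ltac:(lia).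
case: (eqVneq (L - e)%N c.+1) => [ec | nec].
  by rewrite -ec (passage_corner y) // (passage_corner x) // ec /=; lia.
have IHleft := IH e ltac:(lia) ltac:(lia) ltac:(lia).
have hc' : (L - e < c.+1)%N by lia.
by rewrite (passageE y) // (passageE x) //=; lia.
Qed.

(* Along the column induction [Zg <= zeta], [rho <= min xi zeta], and
   [max Zg rho = zeta] as soon as [rho < xi]. *)
Lemma max_defect_identity (Zg rho zeta xi delta : nat -> Z) (j B : nat) :
  rho j = Z.min (xi j) (zeta j) ->
  (forall c, (j <= c < B)%N -> rho c.+1 = rho c + Z.min (xi c.+1) (zeta c.+1) - xi c) ->
  (forall c, (j <= c < B)%N -> zeta c.+1 = Z.max (xi c) (zeta c) + delta c.+1) ->
  Zg j.+1 = xi j + delta j.+1 ->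
  (forall c, (j < c < B)%N -> Zg c.+1 = Z.max (Zg c) (xi c) + delta c.+1) ->
  forall c, (j < c <= B)%N ->
    Z.max (Zg c) (rho c) + Z.max (xi c - zeta c) 0 = Z.max (Zg c) (xi c).
Proof.
move=> rho0 rhoS zetaS Zg0 ZgS c /andP[hjc hcB].
suff [? ? ? inv] : [/\ Zg c <= zeta c, rho c <= xi c, rho c <= zeta c &
      (rho c < xi c -> Z.max (Zg c) (rho c) = zeta c)].
  by case: (Z.lt_ge_cases (rho c) (xi c)) => [/inv|]; lia.
move: c hjc hcB; apply: nat_ind_from => [|c hjc IH] hcB.
  by have := rhoS j; have := zetaS j; split; lia.
have [? ? ? ?] := IH ltac:(lia).
by have := rhoS c; have := zetaS c; have := ZgS c; split; lia.
Qed.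

(* Toggling rows [1..N-1] lowers the base level of the last-passage value by
   one ([passage_toggle]); [passage_gain] is the intermediate value through which
   this is proved by downward induction on the level. *)
Section PassageToggle.
Variables (x z : nat -> nat -> Z) (N L : nat).
Hypothesis toggle : forall e c, (1 <= c)%N -> (c + e <= N.-1)%N ->
  z e c = (if c == 1%N then x e.+1 1 else Z.max (x e.+1 c) (z e c.-1)) + gain x z e c.
Hypothesis L_gt0 : (1 <= L)%N.
Hypothesis L_le : (L <= N.-1)%N.

Definition passage_gain e c :=
  max_range (fun j => passage x L e.+1 j.-1 + sum_range (gain x z e) j c) (L - e) c.

Definition passage_toggle_at e := forall c, (L - e <= c)%N -> (c + e <= N.-1)%N ->
  passage z L.-1 e c.-1 = passage_gain e c.

Lemma toggle_gt1 e c : (1 < c)%N -> (c + e <= N.-1)%N ->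
  z e c = Z.max (x e.+1 c) (z e c.-1) + gain x z e c.
Proof. by move=> hc hce; rewrite toggle ?gtn_eqF //; lia. Qed.

Lemma passage_toggle_top : passage_toggle_at L.-1.
Proof.
move=> c hc hcN; rewrite passage_base prednK; last by lia.
rewrite /passage_gain (_ : (L - L.-1 = 1)%N); last by lia.
rewrite (@eq_max_range _ (fun j => x L j + sum_range (gain x z L.-1) j c)); first last.
- by lia.
- by move=> i hi; rewrite prednK // passage_base prednK //; lia.
move: c hc hcN; rewrite (_ : (L - L.-1 = 1)%N); last by lia.
apply: nat_ind_from => [|c hc IH] hcN.
  by rewrite max_range1 sum_range1 toggle //= prednK.
rewrite max_range_sum_rangeS // -IH; last by lia.
by rewrite (toggle_gt1 (c := c.+1)) //= prednK //; lia.
Qed.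

Section Down.
Variable e : nat.
Hypothesis e_lt : (e.+1 <= L.-1)%N.
Let j0 := (L - e.+1)%N.
Let U j := passage x L e.+2 j.-1 - x e.+1 j.
Let rho j c := x e.+1 j + sum_range (gain x z e.+1) j c.
Let Zg j c := max_range (fun i => x e.+1 i + sum_range (gain x z e) i c) j.+1 c.

Lemma j0_gt0 : (1 <= j0)%N.
Proof. by rewrite /j0; lia. Qed.

Lemma passage_split c : (j0 <= c)%N -> passage x L e.+1 c = max_range U j0 c + x e.+1 c.+1.
Proof.
move: c; apply: nat_ind_from => [|c hc IH].
  by rewrite max_range1 /U /j0 passage_corner; lia.
rewrite passageE /=; [| lia | by rewrite /j0 in hc; lia].
by rewrite IH max_rangeS // [U c.+1]/U /=; lia.
Qed.

Lemma passage_gain_succ c : (j0 <= c)%N ->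
  passage_gain e.+1 c = max_range (fun j => U j + rho j c) j0 c.
Proof. by move=> h; apply: eq_max_range => // i hi; rewrite /U /rho; lia. Qed.

Lemma passage_gain_exchange c : (j0 < c)%N ->
  passage_gain e c = max_range (fun j => U j + Zg j c) j0 c.-1.
Proof.
move=> h; rewrite /passage_gain (_ : (L - e = j0.+1)%N); last by rewrite /j0; lia.
rewrite (@eq_max_range _ (fun j => max_range U j0 j.-1 + (x e.+1 j + sum_range (gain x z e) j c)));
  first last.
- by lia.
- by move=> i hi; rewrite passage_split ?prednK; lia.
have -> : c = c.-1.+1 by lia.
by rewrite max_range_exchange -?pred_Sn //; lia.
Qed.

Lemma diagonal_defect j c : (j0 <= j < c)%N -> (c + e < N.-1)%N ->
  Z.max (Zg j c) (rho j c) + Z.max (x e.+1 c.+1 - z e c) 0 = Z.max (Zg j c) (x e.+1 c.+1).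
Proof.
move=> /andP[hj hjc] hcN.
have hj0 := j0_gt0.
apply: (@max_defect_identity (Zg j) (rho j) (z e) (fun c => x e.+1 c.+1) (gain x z e) j c);
  last by rewrite hjc leqnn.
- by rewrite /rho sum_range1 /gain; lia.
- by move=> c' hc'; rewrite /rho sum_rangeS ?/gain; lia.
- by move=> c' hc'; rewrite toggle_gt1 //= ?Z.max_comm; lia.
- by rewrite /Zg max_range1 sum_range1.
- by move=> c' hc'; rewrite /Zg max_range_sum_rangeS; lia.
Qed.

Lemma passage_gain_max c : (j0 < c)%N -> (c + e < N.-1)%N ->
  Z.max (passage_gain e c) (passage_gain e.+1 c) + Z.max (x e.+1 c.+1 - z e c) 0 =
  Z.max (passage_gain e c) (passage x L e.+1 c).
Proof.
move=> hc hcN; have hj0 := j0_gt0.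
have last_col : rho c c + Z.max (x e.+1 c.+1 - z e c) 0 = x e.+1 c.+1.
  by rewrite /rho sum_range1 /gain; lia.
have ec : c = c.-1.+1 by lia.
rewrite passage_gain_succ 1?passage_gain_exchange ?passage_split; try lia.
rewrite [in max_range _ j0 c]ec max_rangeS -?ec; try lia.
rewrite [in max_range U j0 c]ec max_rangeS -?ec; try lia.
set A := max_range (fun j => U j + Zg j c) j0 c.-1.
set B := max_range (fun j => U j + rho j c) j0 c.-1.
have AB : Z.max A B + Z.max (x e.+1 c.+1 - z e c) 0 =
          max_range (fun j => Z.max (U j + Zg j c) (U j + x e.+1 c.+1)) j0 c.-1.
  rewrite /A /B -max_range_max -?max_rangeDr; try lia.
  apply: eq_max_range => [i hi|]; last by lia.
  by have := diagonal_defect (j := i) (c := c) ltac:(lia) hcN; lia.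
have hj0c : (j0 <= c.-1)%N by lia.
by rewrite max_range_max // (max_rangeDr U) // in AB; lia.
Qed.

Lemma passage_toggle_corner : passage_toggle_at e.+1 -> (L - e + e <= N.-1)%N ->
  passage z L.-1 e (L - e).-1 = passage_gain e (L - e).
Proof.
move=> IHe hN; have hj0 := j0_gt0.
have -> : ((L - e).-1 = L.-1 - e)%N by lia.
rewrite passage_corner; last by lia.
rewrite IHe; [|lia|lia].
rewrite (_ : ((L.-1 - e).+1 = L - e)%N); last by lia.
rewrite (_ : (L.-1 - e = j0)%N); last by rewrite /j0; lia.
rewrite /passage_gain -/j0 (_ : (L - e = j0.+1)%N); last by rewrite /j0; lia.
rewrite !max_range1 !sum_range1 (toggle_gt1 (c := j0.+1)) /=; [|lia|lia].
by rewrite passage_corner -/j0 /gain /=; lia.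
Qed.

Lemma passage_toggle_down : passage_toggle_at e.+1 -> passage_toggle_at e.
Proof.
move=> IHe c hc; move: c hc; apply: nat_ind_from => [|c hc IH] hN.
  exact: passage_toggle_corner.
have hj0 := j0_gt0.
rewrite passageE /= ?IH ?IHe; try lia.
rewrite /passage_gain max_range_sum_rangeS // -/(passage_gain e c) -/(passage_gain e.+1 c).
rewrite (toggle_gt1 (c := c.+1)) /=; try lia.
by have := passage_gain_max (c := c) ltac:(rewrite /j0; lia) ltac:(lia); lia.
Qed.

End Down.

Lemma passage_toggle_all e : (e <= L.-1)%N -> passage_toggle_at e.
Proof.
move=> he; rewrite -(subKn he); move: (L.-1 - e)%N (leq_subr e L.-1).
elim=> [|k IH] hk; first by rewrite subn0; exact: passage_toggle_top.
rewrite subnS; apply: passage_toggle_down; first by lia.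
by rewrite prednK; [apply: IH | ]; lia.
Qed.

Lemma passage_gain0 c : (L <= c)%N -> passage_gain 0 c = passage x L 0 c.
Proof.
move: c; apply: nat_ind_from => [|c hc IH].
  have := passage_corner x L_gt0; rewrite subn0 => ->.
  by rewrite /passage_gain subn0 max_range1 sum_range1 /gain; lia.
rewrite /passage_gain max_range_sum_rangeS; last by lia.
by rewrite -/(passage_gain 0 c) IH // [RHS]passageE /gain /=; lia.
Qed.

Lemma passage_toggle : passage z L.-1 0 N.-1.-1 = passage x L 0 N.-1.
Proof.
by rewrite -passage_gain0 // (passage_toggle_all (e := 0)) //; lia.
Qed.

End PassageToggle.

Lemma S_op_diagZ n X : GT n X -> forall t, (1 <= t <= n)%N ->
  Z.of_nat (S_op n X t t) = passage (diagZ X) (n - t) 0 n.-1.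
Proof.
elim: n X => [|n IH] X GX t /andP[t_gt0 t_le]; first by lia.
case: n IH GX t_le => [|n] IH GX t_le.
  by rewrite (_ : t = 1%N) ?passage_base /diagZ /S_op //; lia.
have [-> | t_ne] := eqVneq t n.+2.
  by rewrite subnn passage_base /diagZ /S_op S_aux_above //= addn0.
have GXt : GT n.+1 (omega n.+1 X) by exact: GT_pred_size (omega_GT _ GX).
rewrite [S_op _ _]/= -/(S_op n.+1 _) IH //; last by lia.
rewrite (_ : (n.+1 - t = (n.+2 - t).-1)%N); last by lia.
apply: (@passage_toggle _ _ n.+2); [exact: omega_diagZ | lia | lia].
Qed.

Close Scope Z_scope.

Lemma GOGAm_dominated n X Y : GOGAm n X -> GT n Y ->
  (forall d c, c + d < n -> (diagZ Y d c.+1 <= diagZ X d c.+1)%Z) ->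
  (forall d c, 1 <= c -> c + d < n ->
     (diagZ Y d c.+1 - diagZ Y d c <= diagZ X d c.+1 - diagZ X d c)%Z) ->
  GOGAm n Y.
Proof.
case=> GX [_ MX] GY entry_le incr_le; split=> //; split; first by apply: S_aux_GT => //; lia.
move=> t t_gt0 t_le; have t_in : 0 < t <= n by rewrite t_gt0.
have := MX t t_gt0 t_le; have := S_op_diagZ GX t_in; have := S_op_diagZ GY t_in.
have : (passage (diagZ Y) (n - t) 0 n.-1 <= passage (diagZ X) (n - t) 0 n.-1)%Z.
  apply: (@passage_mono _ _ (n - t) n) => [c hc | d c hd hc hcn | | |]; try lia.
    by apply: entry_le; lia.
  by apply: incr_le; lia.
lia.
Qed.

Lemma GOGAm_clear_lower n X k : GOGAm n X -> 1 <= k <= n ->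
  GOGAm n (fun i j => if [&& 1 <= j, j + k <= i & i <= n] then 1 else X i j).
Proof.
move=> HX /andP[k_gt0 k_le]; have GX := HX.1.
apply: (GOGAm_dominated HX); rewrite /diagZ.
- split=> i j j_gt0 ji iN.
    by case: ifP => _ //; apply: (GT_ge1 GX j_gt0 ji iN).
  have := GT_interlace_l GX j_gt0 ji iN; have := GT_interlace_r GX j_gt0 ji iN.
  have := GT_ge1 GX (i := i) j_gt0 ji ltac:(lia).
  have := GT_ge1 GX (i := i.+1) (j := j.+1) ltac:(lia) ltac:(lia) ltac:(lia).
  by do 3 case: ifP => ?; split; lia.
- move=> d c hcd.
  have := GT_ge1 GX (i := c.+1 + d) (j := c.+1) ltac:(lia) ltac:(lia) ltac:(lia).
  by case: ifP => ?; lia.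
- move=> d c c_gt0 hcd.
  have := GT_interlace_r GX (i := c + d) (j := c) c_gt0 ltac:(lia) ltac:(lia).
  by rewrite -addSn; do 2 case: ifP => ?; lia.
Qed.

Lemma GOGAm_flatten_diag n X m k : GOGAm n X -> 1 <= k <= m -> m <= n ->
  (forall i, m.+1 <= i -> i <= n -> forall l, l <= n - i -> X (i + l) (k + l) = X i k) ->
  GOGAm n (fun i j => if [&& m < i, i <= n & i + k == j + m] then X m k else X i j).
Proof.
move=> HX /andP[k_gt0 k_le] m_le diag_const; have GX := HX.1.
have Xmk_ge1 := GT_ge1 GX k_gt0 k_le m_le.
have below_diag d c : m <= c + d -> d + k = m -> c + d <= n -> X m k <= X (c + d) c.
  move=> hm hd hc.
  have := GT_diag_mono GX (d := d) (c := k) (c' := c) k_gt0 ltac:(lia) ltac:(lia).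
  by rewrite (_ : k + d = m); lia.
apply: (GOGAm_dominated HX); rewrite /diagZ.
- split=> i j j_gt0 ji iN.
    by case: ifP => _ //; apply: (GT_ge1 GX j_gt0 ji iN).
  have := GT_interlace_l GX j_gt0 ji iN; have := GT_interlace_r GX j_gt0 ji iN.
  have above_diag : m < i -> i + k = j + m -> X i.+1 j <= X m k.
    move=> hm hj.
    have := diag_const m.+1 (leqnn _) ltac:(lia) (j - k) ltac:(lia).
    rewrite (_ : m.+1 + (j - k) = i.+1); last by lia.
    rewrite (_ : k + (j - k) = j); last by lia.
    by move=> ->; apply: (GT_interlace_l GX k_gt0 k_le); lia.
  have := below_diag (i.+1 - j) j; rewrite (_ : j + (i.+1 - j) = i.+1); last by lia.
  have on_diag : i = m -> j = k -> X i j = X m k by move=> -> ->.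
  by do 3 case: ifP => ?; split; lia.
- move=> d c hcd; have := below_diag d c.+1; by case: ifP => ?; lia.
- move=> d c c_gt0 hcd.
  have := GT_interlace_r GX (i := c + d) (j := c) c_gt0 ltac:(lia) ltac:(lia).
  have on_diag : c + d = m -> c = k -> X (c + d) c = X m k by move=> -> ->.
  by rewrite -addSn; do 2 case: ifP => ?; lia.
Qed.

Theorem mainTheorem8 (n : nat) (X : triangle) (HX : GOGAm n X) :
  (* (i) *)
  (forall k, 1 <= k -> k <= n ->
     GOGAm n (fun i j => if [&& 1 <= j, j + k <= i & i <= n] then 1 else X i j)) /\
  (* (ii) *)
  (forall m k, 1 <= k -> k <= m -> m <= n ->
     (forall i, m.+1 <= i -> i <= n ->
        forall l, l <= n - i -> X (i + l) (k + l) = X i k) ->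
     GOGAm n (fun i j => if [&& m < i, i <= n & i + k == j + m] then X m k
                         else X i j)).
Proof.
split=> [k k_gt0 k_le | m k k_gt0 k_le m_le diag_const].
  by apply: GOGAm_clear_lower; rewrite ?k_gt0.
by apply: GOGAm_flatten_diag; rewrite ?k_gt0.
Qed.
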